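(* The superconnecting filter $\mathcal{F}_\infty$ of the Kirch space satisfies $$\mathcal{F}_\infty=\{B\subseteq\mathbb{N}:\exists q\in\mathbb{N}\text{ odd and square-free with }q\mathbb{N}\subseteq B\}.$$
   Context: $\mathbb{N}=\{1,2,\dots\}$, $\mathbb{N}_0=\{0\}\cup\mathbb{N}$, $q\mathbb{N}=\{qn:n\in\mathbb{N}\}$. The Kirch topology $\tau_K$ on $\mathbb{N}$ is generated by the base of all $a+b\mathbb{N}_0=\{a+bn:n\in\mathbb{N}_0\}$ with $a,b\in\mathbb{N}$ coprime and $b$ square-free (not divisible by the square of a prime). Closures are in $\tau_K$. The superconnecting filter is $\mathcal{F}_\infty=\{B\subseteq\mathbb{N}:\exists n\in\mathbb{N}\ \exists U_1,\dots,U_n\in\tau_K\setminus\{\emptyset\}\ (\overline{U_1}\cap\dots\cap\overline{U_n}\subseteq B)\}$. *)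

From mathcomp Require Import all_boot.
Set Implicit Arguments. Unset Strict Implicit. Unset Printing Implicit Defensive.

(* The ambient set N = {1,2,...} is represented as the positive elements of
   nat; subsets of N are predicates P : nat -> Prop with P x -> 0 < x. *)
Definition subN (P : nat -> Prop) : Prop := forall x, P x -> 0 < x.

Definition squarefree (b : nat) : Prop :=
  forall p, prime p -> ~ (p * p %| b).

Definition arith (a b : nat) : nat -> Prop := fun x => exists n, x = a + b * n.

Definition kirch_base (a b : nat) : Prop :=
  [/\ 0 < a, 0 < b, coprime a b & squarefree b].

Definition kirch_open (U : nat -> Prop) : Prop :=
  subN U /\
  forall x, U x -> exists a b, [/\ kirch_base a b, arith a b x &
                                  forall y, arith a b y -> U y].

Definition kirch_closure (U : nat -> Prop) : nat -> Prop :=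
  fun x => 0 < x /\
    forall V, kirch_open V -> V x -> exists y, V y /\ U y.

Definition F_infty (B : nat -> Prop) : Prop :=
  subN B /\
  exists (n : nat) (U : 'I_n -> (nat -> Prop)),
    0 < n /\
    (forall i, kirch_open (U i) /\ exists x, U i x) /\
    (forall x, (forall i, kirch_closure (U i) x) -> B x).

Definition multN (q : nat) : nat -> Prop := fun x => exists n, 0 < n /\ x = q * n.

From mathcomp Require Import all_boot zify.

(* A nonempty Kirch-open set contains a basic set a + bN_0, and the closure of
   a + bN_0 contains every positive multiple x of the odd primes dividing b: a
   basic neighbourhood c + dN_0 of x satisfies gcd(b, d) | 2, with a = x mod 2
   when 2 | gcd(b, d), so it meets a + bN_0 by Bezout.  Hence finitely many
   closures all contain qN, for q the product of the odd primes up to the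
   largest modulus.  Conversely, for an odd prime p a point of the closures of
   both 1 + pN_0 and 2 + pN_0 that is prime to p would be congruent to both 1
   and 2 mod p; so the closures of these sets, over the primes p | q, meet
   inside qN. *)

Set Implicit Arguments.
Unset Strict Implicit.
Unset Printing Implicit Defensive.

Lemma squarefree_prime p : prime p -> squarefree p.
Proof.
move=> pp r pr rr_p; have : r %| p by apply: dvdn_trans rr_p; apply: dvdn_mulr.
rewrite dvdn_prime2 // => /eqP r_eq_p; move: rr_p; rewrite r_eq_p.
by move/(dvdn_leq (prime_gt0 pp)); have := prime_gt1 pp; nia.
Qed.

Lemma squarefree1 : squarefree 1.
Proof. by move=> r pr; rewrite dvdn1 muln_eq1 andbb => /eqP r1; rewrite r1 in pr. Qed.

Lemma squarefree_dvd d q : squarefree q -> d %| q -> squarefree d.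
Proof. by move=> sq dq r pr rr_d; apply: (sq r pr); apply: dvdn_trans dq. Qed.

Lemma squarefree_dvdn q x : 0 < q -> squarefree q ->
  (forall p, prime p -> p %| q -> p %| x) -> q %| x.
Proof.
move=> q0 sq dvd_x; apply/dvdn_partP => // p; rewrite mem_primes.
case/and3P=> pp _ pq; rewrite p_part.
suff -> : logn p q = 1 by rewrite expn1 dvd_x.
have : 0 < logn p q by rewrite logn_gt0 mem_primes pp q0 pq.
suff : logn p q < 2 by lia.
rewrite ltnNge; apply: contra_notN (sq p pp) => le2.
by rewrite mulnn; apply: dvdn_trans (pfactor_dvdnn p q); rewrite dvdn_exp2l.
Qed.

Lemma arith_modn a b y : arith a b y -> y = a %[mod b].
Proof. by case=> n ->; rewrite addnC mulnC modnMDl. Qed.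

Lemma arith_refl a b : arith a b a.
Proof. by exists 0; rewrite muln0 addn0. Qed.

Lemma arith_trans a b x y : arith a b x -> arith x b y -> arith a b y.
Proof. by case=> m -> [n ->]; exists (m + n); rewrite mulnDr addnA. Qed.

Lemma arith_meet a b c d : 0 < b -> 0 < d -> a = c %[mod gcdn b d] ->
  exists y, arith a b y /\ arith c d y.
Proof.
wlog le_ac : a b c d / a <= c => [hwlog b0 d0 eq_ac|].
  have [le_ac|lt_ca] := leqP a c; first exact: hwlog.
  have [|y [ya yc]] := hwlog c d a b (ltnW lt_ca) d0 b0; last by exists y.
  by rewrite gcdnC.
move=> b0 _ /eqP; rewrite eq_sym eqn_mod_dvd // => /dvdnP[k c_a].
have [u v uv _] := egcdnP d b0.
exists (c + d * (v * k)); split; last by exists (v * k).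
exists (u * k); rewrite !mulnA (mulnC b u) uv (mulnC d v) mulnDl.
by rewrite (mulnC (gcdn b d)) -c_a; lia.
Qed.

Lemma kirch_open_arith a b : kirch_base a b -> kirch_open (arith a b).
Proof. by case=> a0 b0 cab sqb; split=> [x [n ->]|x ax]; [lia | exists a, b]. Qed.

Lemma kirch_closureS (U V : nat -> Prop) : (forall y, U y -> V y) ->
  forall x, kirch_closure U x -> kirch_closure V x.
Proof.
move=> UV x [x0 meetU]; split=> // W oW Wx.
by have [y [Wy /UV Vy]] := meetU W oW Wx; exists y.
Qed.

Section OddPrimeDivisors.

Variables (b x : nat).
Hypothesis odd_prime_dvd : forall p, prime p -> odd p -> p %| b -> p %| x.

Lemma gcdn_dvd2 d : 0 < b -> squarefree b -> coprime x d -> gcdn b d %| 2.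
Proof.
move=> b0 sqb cxd; apply: squarefree_dvdn; rewrite ?gcdn_gt0 ?b0 //.
  exact: squarefree_dvd sqb (dvdn_gcdl b d).
move=> p pp; rewrite dvdn_gcd => /andP[pb pd].
have [-> // | op] := even_prime pp.
have /(coprime_dvdl (odd_prime_dvd pp op pb)) : coprime x d := cxd.
by rewrite prime_coprime // pd.
Qed.

Lemma kirch_base_eq_mod_gcdn a c d : kirch_base a b -> kirch_base c d ->
  arith c d x -> a = x %[mod gcdn b d].
Proof.
move=> [_ b0 cab sqb] [_ _ ccd _] cdx.
have cxd : coprime x d by rewrite -coprime_modl (arith_modn cdx) coprime_modl.
have /(dvdn_leq (isT : 0 < 2)) := gcdn_dvd2 b0 sqb cxd.
have : 0 < gcdn b d by rewrite gcdn_gt0 b0.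
case: (gcdn b d) (dvdn_gcdl b d) (dvdn_gcdr b d) => [|[|[|//]]] // g2b g2d _ _.
  by rewrite !modn1.
have oa : odd a by rewrite -coprimen2 (coprime_dvdr g2b cab).
have ox : odd x by rewrite -coprimen2 (coprime_dvdr g2d cxd).
by rewrite !modn2 oa ox.
Qed.

Lemma kirch_closure_arith a : kirch_base a b -> 0 < x -> kirch_closure (arith a b) x.
Proof.
move=> bab x0; split=> // V [_ oV] Vx.
have [c [d [bcd cdx cdV]]] := oV x Vx.
have [_ b0 _ _] := bab; have [_ d0 _ _] := bcd.
have [y [ay xy]] := arith_meet b0 d0 (kirch_base_eq_mod_gcdn bab bcd cdx).
by exists y; split=> //; apply/cdV/(arith_trans cdx).
Qed.

End OddPrimeDivisors.

Lemma prime_dvd_prod_primes (I : finType) (Q : pred I) (F : I -> nat) r :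
    (forall i, Q i -> prime (F i)) -> prime r -> r %| \prod_(i | Q i) F i ->
  exists2 i, Q i & F i = r.
Proof.
move=> prime_F pr; rewrite Euclid_dvd_prod // big_has_cond.
case/hasP=> i _ /andP[Qi]; rewrite dvdn_prime2 ?prime_F // => /eqP.
by exists i.
Qed.

Lemma squarefree_prod_primes (I : finType) (Q : pred I) (F : I -> nat) :
    (forall i, Q i -> prime (F i)) -> {in Q &, injective F} ->
  squarefree (\prod_(i | Q i) F i).
Proof.
move=> prime_F injF r pr rr_dvd.
have [i Qi Fi_r] : exists2 i, Q i & F i = r.
  apply: prime_dvd_prod_primes => //.
  by apply: dvdn_trans rr_dvd; apply: dvdn_mulr.
move: rr_dvd; rewrite (bigD1 i) //= Fi_r dvdn_pmul2l ?prime_gt0 //.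
case/prime_dvd_prod_primes=> [j /andP[/prime_F //] | // | j /andP[Qj]].
by rewrite -Fi_r => /eqP + /injF Fji; apply; apply: Fji.
Qed.

Definition odd_primorial M := \prod_(p < M.+1 | prime p && odd p) (p : nat).

Lemma odd_primorial_gt0 M : 0 < odd_primorial M.
Proof. by apply: prodn_cond_gt0 => p /andP[/prime_gt0]. Qed.

Lemma odd_odd_primorial M : odd (odd_primorial M).
Proof. by apply: (big_ind odd) => // [m n om on | p /andP[]]; rewrite ?oddM ?om. Qed.

Lemma squarefree_odd_primorial M : squarefree (odd_primorial M).
Proof.
by apply: squarefree_prod_primes => [p /andP[] | p q _ _ /val_inj].
Qed.

Lemma dvdn_odd_primorial M p : prime p -> odd p -> p <= M -> p %| odd_primorial M.
Proof.
move=> pp op le_pM; have lt_pM : p < M.+1 by [].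
by rewrite /odd_primorial (bigD1 (Ordinal lt_pM)) ?pp ?op //= dvdn_mulr.
Qed.

Lemma F_infty_odd_squarefree B : F_infty B ->
  exists q, [/\ 0 < q, odd q, squarefree q & forall x, multN q x -> B x].
Proof.
case=> _ [n [U [_ [openU capB]]]].
have /fin_all_exists[ab base_ab] : forall i, exists ab : nat * nat,
    kirch_base ab.1 ab.2 /\ forall y, arith ab.1 ab.2 y -> U i y.
  move=> i; have [[_ oU] [x Ux]] := openU i.
  by have [a [b [bab _ abU]]] := oU x Ux; exists (a, b).
set M := \max_i (ab i).2.
exists (odd_primorial M); split; rewrite ?odd_primorial_gt0 ?odd_odd_primorial //.
  exact: squarefree_odd_primorial.
move=> _ [m [m0 ->]]; apply: capB => i; have [bab abU] := base_ab i.
have [_ b0 _ _] := bab.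
apply: (kirch_closureS abU); apply: (kirch_closure_arith _ bab); last first.
  by rewrite muln_gt0 odd_primorial_gt0.
move=> p pp op pb; apply/dvdn_mulr/dvdn_odd_primorial => //.
exact: leq_trans (dvdn_leq b0 pb) (leq_bigmax i).
Qed.

Lemma kirch_closure_arith_prime a p x : prime p -> kirch_closure (arith a p) x ->
  ~~ (p %| x) -> x = a %[mod p].
Proof.
move=> pp [x0 meet] npx.
have bxp : kirch_base x p.
  split=> //; first exact: prime_gt0.
    by rewrite coprime_sym prime_coprime.
  exact: squarefree_prime.
have [y [/arith_modn <- /arith_modn]] := meet _ (kirch_open_arith bxp) (arith_refl x p).
by [].
Qed.

Lemma dvdn_of_kirch_closures p x : prime p -> odd p ->
  kirch_closure (arith 1 p) x -> kirch_closure (arith 2 p) x -> p %| x.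
Proof.
move=> pp op cl1 cl2; apply: contraT => npx.
have p_gt2 : 2 < p by case: (even_prime pp) op (prime_gt1 pp) => [-> | _] //; lia.
have := kirch_closure_arith_prime pp cl2 npx.
by rewrite (kirch_closure_arith_prime pp cl1 npx) !modn_small //; lia.
Qed.

Lemma F_infty_of_bases B (s : seq (nat * nat)) : subN B -> 0 < size s ->
    {in s, forall ab, kirch_base ab.1 ab.2} ->
    (forall x, 0 < x -> {in s, forall ab, kirch_closure (arith ab.1 ab.2) x} -> B x) ->
  F_infty B.
Proof.
move=> sB s0 base_s capB; split=> //.
pose U (i : 'I_(size s)) := arith (nth (1, 1) s i).1 (nth (1, 1) s i).2.
exists (size s), U; split=> //; split.
  move=> i; have /base_s bi := mem_nth (1, 1) (ltn_ord i).
  by split; [exact: kirch_open_arith | exists (nth (1, 1) s i).1; apply: arith_refl].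
move=> x capU; apply: capB => [|ab ab_s]; first exact: (capU (Ordinal s0)).1.
have i_lt : index ab s < size s by rewrite index_mem.
by have := capU (Ordinal i_lt); rewrite /U /= nth_index.
Qed.

Lemma multN_dvdn q x : 0 < x -> q %| x -> multN q x.
Proof.
move=> x0 /dvdnP[k x_kq]; exists k; split; last by rewrite mulnC.
by move: x0; rewrite x_kq muln_gt0 => /andP[].
Qed.

Lemma F_infty_multN B q : subN B -> 0 < q -> odd q -> squarefree q ->
  (forall x, multN q x -> B x) -> F_infty B.
Proof.
move=> sB q0 oq sqq qB.
(* The entry (1, 1) keeps the family nonempty when q = 1. *)
pose s := (1, 1) :: [seq (a, p) | a <- [:: 1; 2], p <- primes q].
have s_ap a p : a \in [:: 1; 2] -> prime p -> p %| q -> (a, p) \in s.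
  by move=> a12 pp pq; rewrite in_cons allpairs_f ?orbT // mem_primes pp q0 pq.
apply: (F_infty_of_bases (s := s)) => //.
  move=> ab; rewrite inE => /predU1P[-> | /allpairsP[[a p] [/= a12 pq ->]]].
    by split=> //; exact: squarefree1.
  have /and3P[pp _ p_q] : [&& prime p, 0 < q & p %| q] by rewrite -mem_primes.
  move: a12; rewrite !inE => /orP[] /eqP ->;
    by split; rewrite /= ?(prime_gt0 pp) ?coprime1n ?coprime2n ?(dvdn_odd p_q oq) //;
       apply: squarefree_prime.
move=> x x0 cl_s; apply: qB; apply: multN_dvdn => //.
apply: squarefree_dvdn => // p pp pq.
have [s1 s2] : (1, p) \in s /\ (2, p) \in s by split; apply: s_ap.
exact: dvdn_of_kirch_closures pp (dvdn_odd pq oq) (cl_s _ s1) (cl_s _ s2).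
Qed.

Theorem lemma3p7 (B : nat -> Prop) :
  F_infty B <->
  (subN B /\
   exists q, [/\ 0 < q, odd q, squarefree q & forall x, multN q x -> B x]).
Proof.
split=> [FB | [sB [q [q0 oq sqq qB]]]].
  by split; [case: FB | exact: F_infty_odd_squarefree].
exact: F_infty_multN sB q0 oq sqq qB.
Qed.
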